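(* There exist polynomials $u,\alpha\in k[T]$ such that $$P_2(T)^p-P_2^\sigma(T^p)=m_p\bigl(\bar P'(T)^p\,u(T)-2\alpha(T)\,\bar P(T)^p\bigr)\quad\text{in } W_2(k)[T],$$ and for such $u,\alpha$ a lift of the Frobenius of $U_0$ to $U_1$ is determined by $$F_2(x)=x^p+m_p(u(x)),\qquad F_2(y)=y^p+y^p\,m_p(\alpha(x)).$$
   Context: $k$ is a finite field of characteristic $p\neq 2$, $W_2(k)=W(k)/p^2$, and $\sigma$ is the Frobenius of $W_2(k)$ lifting $a\mapsto a^p$; for $Q=\sum b_jT^j$ set $Q^\sigma=\sum\sigma(b_j)T^j$. Let $P\in W(k)[X]$ be monic of odd degree $d=2g+1$, separable over $\operatorname{Frac}W(k)$, with separable reduction $\bar P\in k[X]$; $P_2$ is its reduction mod $p^2$. $U_0=\operatorname{Spec}k[x,y]/(y^2-\bar P(x))$ and $U_1=\operatorname{Spec}W_2(k)[x,y]/(y^2-P_2(x))$. $m_p$ denotes the map from $k$-objects to $W_2(k)$-objects induced by multiplication by $p$ (coming from the exact sequence $0\to k\xrightarrow{m_p}W_2(k)\to k\to0$), e.g. $m_p:k[T]\to W_2(k)[T]$ and $m_p:\mathcal{O}(U_0)\to\mathcal{O}(U_1)$. A lift of Frobenius on $U_1$ means a $\sigma$-semilinear ring endomorphism $F_2$ of $\mathcal{O}(U_1)$ reducing mod $p$ to $f\mapsto f^p$. *)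

From HB Require Import structures.
From mathcomp Require Import all_boot all_algebra finalg separable.
From mathcomp Require Import ring.
Set Implicit Arguments. Unset Strict Implicit. Unset Printing Implicit Defensive.
Import GRing.Theory.
Local Open Scope ring_scope.

(* The coordinate ring  A[x,y]/(y^2 - Q(x))  of the affine curve y^2 = Q(x)
   over a commutative ring A, realised concretely as the free A[x]-module with
   basis 1, y: an element (a, b) stands for a(x) + b(x) y, and
   (a + b y)(c + d y) = (ac + bd Q) + (ad + bc) y. *)
Section HypRing.
Variable A : comNzRingType.

Definition hyp_ring (Q : {poly A}) : Type := ({poly A} * {poly A})%type.

Variable Q : {poly A}.

HB.instance Definition _ :=
  GRing.Zmodule.copy (hyp_ring Q) ({poly A} * {poly A})%type.

Definition hyp_one : hyp_ring Q := (1, 0).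
Definition hyp_mul (a b : hyp_ring Q) : hyp_ring Q :=
  (a.1 * b.1 + a.2 * b.2 * Q, a.1 * b.2 + a.2 * b.1).

Lemma hyp_mulA : associative hyp_mul.
Proof. by case=> a1 a2 [b1 b2] [c1 c2]; rewrite /hyp_mul /=; congr pair; ring. Qed.
Lemma hyp_mulC : commutative hyp_mul.
Proof. by case=> a1 a2 [b1 b2]; rewrite /hyp_mul /=; congr pair; ring. Qed.
Lemma hyp_mul1 : left_id hyp_one hyp_mul.
Proof. by case=> a1 a2; rewrite /hyp_mul /=; congr pair; ring. Qed.
Lemma hyp_mulDl : left_distributive hyp_mul +%R.
Proof.
case=> a1 a2 [b1 b2] [c1 c2]; rewrite /hyp_mul /=.
have addE : forall u v w z : {poly A}, (u, v) + (w, z) = (u + w, v + z) :> hyp_ring Q by [].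
by rewrite !addE /=; congr pair; ring.
Qed.
Lemma hyp_one_neq0 : hyp_one != 0.
Proof. by apply/eqP => -[] /eqP; rewrite oner_eq0. Qed.

HB.instance Definition _ := GRing.Zmodule_isComNzRing.Build (hyp_ring Q)
  hyp_mulA hyp_mulC hyp_mul1 hyp_mulDl hyp_one_neq0.

Definition hyp_x : hyp_ring Q := ('X, 0).
Definition hyp_y : hyp_ring Q := (0, 1).
Definition hyp_const (c : A) : hyp_ring Q := (c%:P, 0).
Definition hyp_polx (f : {poly A}) : hyp_ring Q := (f, 0).

End HypRing.

(* Coefficientwise map between coordinate rings (used for reduction mod p,
   and for m_p : O(U_0) -> O(U_1)). *)
Definition hyp_map (A B : comNzRingType) (Q : {poly A}) (Q' : {poly B})
  (f : A -> B) (a : hyp_ring Q) : hyp_ring Q' :=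
  (map_poly f a.1, map_poly f a.2).

Definition semilinear_ring_endo (A : comNzRingType) (Q : {poly A})
  (sigma : A -> A) (F : hyp_ring Q -> hyp_ring Q) : Prop :=
  [/\ forall a b, F (a + b) = F a + F b,
      forall a b, F (a * b) = F a * F b,
      F 1 = 1 &
      forall (c : A) a, F (hyp_const Q c * a) = hyp_const Q (sigma c) * F a].

Definition frobenius_lift (A B : comNzRingType) (Q : {poly A}) (Qbar : {poly B})
  (p : nat) (sigma : A -> A) (pi : A -> B) (F : hyp_ring Q -> hyp_ring Q) : Prop :=
  semilinear_ring_endo sigma F /\
  forall a, hyp_map Qbar pi (F a) = (hyp_map Qbar pi a) ^+ p.

From HB Require Import structures.
From mathcomp Require Import all_boot all_algebra finalg separable.
From mathcomp Require Import ring.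
Set Implicit Arguments. Unset Strict Implicit. Unset Printing Implicit Defensive.
Import GRing.Theory.
Local Open Scope ring_scope.

(* The defect P_2^p - P_2^sigma(T^p) vanishes mod p, because raising to the
   p-th power is additive in characteristic p; hence it is p E.  As Pbar is
   separable, Pbar^p and Pbar'^p are coprime, and a Bezout relation writes the
   reduction of E as Pbar'^p u - 2 alpha Pbar^p (2 is invertible since p <> 2).
   Conversely, given such u and alpha, a first-order Taylor expansion (p^2 = 0)
   yields P_2^sigma(x^p + p u) = P_2^p (1 + p alpha)^2 = F(y)^2, so x |-> F(x),
   y |-> F(y) extends sigma to a ring endomorphism of W[x,y]/(y^2 - P_2), which
   is unique and reduces mod p to the Frobenius since F(x), F(y) reduce to
   x^p, y^p. *)

Section HypRingTheory.
Variables (A : comNzRingType) (Q : {poly A}).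
Implicit Types (a b : hyp_ring Q) (q : {poly A}).

Lemma hyp_addE a b : a + b = (a.1 + b.1, a.2 + b.2).
Proof. by []. Qed.

Lemma hyp_mulE a b : a * b = (a.1 * b.1 + a.2 * b.2 * Q, a.1 * b.2 + a.2 * b.1).
Proof. by []. Qed.

Fact hyp_polx_is_zmod_morphism : zmod_morphism (hyp_polx Q).
Proof. by move=> q r; congr pair; rewrite /= subrr. Qed.

Fact hyp_polx_is_monoid_morphism : monoid_morphism (hyp_polx Q).
Proof. by split=> // q r; rewrite /hyp_polx hyp_mulE /= !mulr0 !mul0r !addr0. Qed.

HB.instance Definition _ := GRing.isZmodMorphism.Build _ _ (hyp_polx Q)
  hyp_polx_is_zmod_morphism.
HB.instance Definition _ := GRing.isMonoidMorphism.Build _ _ (hyp_polx Q)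
  hyp_polx_is_monoid_morphism.

Lemma hyp_polx_y_decomp a : a = hyp_polx Q a.1 + hyp_polx Q a.2 * hyp_y Q.
Proof. by case: a => a1 a2; rewrite hyp_addE hyp_mulE /=; congr pair; ring. Qed.

Lemma hyp_y_sqr : hyp_y Q ^+ 2 = hyp_polx Q Q.
Proof. by rewrite expr2 hyp_mulE /=; congr pair; ring. Qed.

End HypRingTheory.

Section HypMap.
Variables (A B : comNzRingType) (f : {rmorphism A -> B}) (Q : {poly A}).
Local Notation red := (@hyp_map A B Q (map_poly f Q) f).

Fact hyp_map_is_zmod_morphism : zmod_morphism red.
Proof. by move=> a b; rewrite /hyp_map /= !rmorphB. Qed.

Fact hyp_map_is_monoid_morphism : monoid_morphism red.
Proof.
split=> [|a b]; first by rewrite /hyp_map /= rmorph1 rmorph0.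
by rewrite /hyp_map !hyp_mulE /= !rmorphD !rmorphM.
Qed.

HB.instance Definition _ := GRing.isZmodMorphism.Build _ _ red
  hyp_map_is_zmod_morphism.
HB.instance Definition _ := GRing.isMonoidMorphism.Build _ _ red
  hyp_map_is_monoid_morphism.

Lemma hyp_map_polx q : red (hyp_polx Q q) = hyp_polx _ (map_poly f q).
Proof. by rewrite /hyp_map /= rmorph0. Qed.

Lemma hyp_map_y : red (hyp_y Q) = hyp_y _.
Proof. by rewrite /hyp_map /= rmorph0 rmorph1. Qed.

End HypMap.

Section HypEndo.
Variables (A : comNzRingType) (sigma : {rmorphism A -> A}) (Q X' : {poly A}).
Variable z : hyp_ring Q.
Hypothesis z_sqr : z ^+ 2 = hyp_polx Q (map_poly sigma Q \Po X').
Implicit Types (q : {poly A}).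

Definition hyp_endo (a : hyp_ring Q) : hyp_ring Q :=
  let C := comp_poly X' \o map_poly sigma in hyp_polx Q (C a.1) + hyp_polx Q (C a.2) * z.

Lemma hyp_endo_polx q : hyp_endo (hyp_polx Q q) = hyp_polx Q (map_poly sigma q \Po X').
Proof. by rewrite /hyp_endo /= !rmorph0 mul0r addr0. Qed.

Lemma hyp_endo_x : hyp_endo (hyp_x Q) = hyp_polx Q X'.
Proof. by rewrite hyp_endo_polx map_polyX comp_polyX. Qed.

Lemma hyp_endo_y : hyp_endo (hyp_y Q) = z.
Proof. by rewrite /hyp_endo /= !rmorph0 !rmorph1 mul1r add0r. Qed.

Lemma hyp_endo_semilinear : semilinear_ring_endo sigma hyp_endo.
Proof.
have endoM (a b : hyp_ring Q) : hyp_endo (a * b) = hyp_endo a * hyp_endo b.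
  by rewrite /hyp_endo hyp_mulE /= !rmorphD !rmorphM /= -z_sqr; ring.
split=> [a b|a b||c a].
- by rewrite /hyp_endo /= !rmorphD /=; ring.
- exact: endoM.
- by rewrite /hyp_endo /= !rmorph1 !rmorph0 mul0r addr0.
- by rewrite endoM hyp_endo_polx map_polyC comp_polyC.
Qed.

Lemma hyp_endo_unique (G : hyp_ring Q -> hyp_ring Q) :
  semilinear_ring_endo sigma G ->
  G (hyp_x Q) = hyp_polx Q X' -> G (hyp_y Q) = z -> G =1 hyp_endo.
Proof.
move=> [GD GM G1 GC] Gx Gy.
have G0 : G 0 = 0 by apply: (addrI (G 0)); rewrite -GD !addr0.
have Gpolx q : G (hyp_polx Q q) = hyp_polx Q (map_poly sigma q \Po X').
  elim/poly_ind: q => [|q c IH]; first by rewrite !rmorph0 G0.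
  have Gc : G (hyp_polx Q c%:P) = hyp_polx Q (sigma c)%:P.
    by rewrite -[hyp_polx Q c%:P]mulr1 GC G1 mulr1.
  rewrite !rmorphD !rmorphM GD GM IH Gx Gc /= map_polyX map_polyC.
  by rewrite comp_polyX comp_polyC.
by move=> a; rewrite [a]hyp_polx_y_decomp GD GM !Gpolx Gy -hyp_polx_y_decomp.
Qed.

Lemma hyp_map_endo (B : comNzRingType) (pi : {rmorphism A -> B}) (p : nat) :
  p \in [pchar B] ->
  (forall q, map_poly pi (map_poly sigma q \Po X') = map_poly pi q ^+ p) ->
  hyp_map (map_poly pi Q) pi z = hyp_y _ ^+ p ->
  forall a, hyp_map (map_poly pi Q) pi (hyp_endo a) = hyp_map (map_poly pi Q) pi a ^+ p.
Proof.
move=> charB redC redz a.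
have charH : p \in [pchar hyp_ring (map_poly pi Q)].
  by apply: (rmorph_pchar (hyp_polx _)); rewrite pchar_poly.
rewrite [in RHS](hyp_polx_y_decomp a) /hyp_endo /= !rmorphD !rmorphM /= !hyp_map_polx.
rewrite hyp_map_y redz !redC -!(pFrobenius_autE charH) !rmorphD !rmorphM /=.
by rewrite !pFrobenius_autE -!rmorphXn.
Qed.

End HypEndo.

Lemma comp_poly_taylor1 (R : comNzRingType) (q z h : {poly R}) :
  h * h = 0 -> q \Po (z + h) = q \Po z + (q^`() \Po z) * h.
Proof.
move=> hh0; elim/poly_ind: q => [|q c IH].
  by rewrite deriv0 !comp_poly0 mul0r addr0.
rewrite derivMXaddC !comp_polyD !comp_polyM !comp_polyX !comp_polyC IH.
have -> : (q \Po z + (q^`() \Po z) * h) * (z + h) =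
  (q \Po z) * z + ((q \Po z) + (q^`() \Po z) * z) * h + (q^`() \Po z) * (h * h) by ring.
by rewrite hh0 mulr0 addr0; ring.
Qed.

Lemma expr_pchar_poly (R : comNzRingType) (p : nat) (charR : p \in [pchar R])
    (q : {poly R}) :
  q ^+ p = map_poly (pFrobenius_aut charR) q \Po 'X^p.
Proof.
have charRX : p \in [pchar {poly R}] by rewrite pchar_poly.
elim/poly_ind: q => [|q c IH]; first by rewrite !rmorph0 -(pFrobenius_autE charRX) rmorph0.
rewrite -(pFrobenius_autE charRX) !rmorphD !rmorphM /= !pFrobenius_autE IH.
by rewrite map_polyX map_polyC comp_polyX comp_polyC -polyC_exp.
Qed.

Lemma separable_expr_Bezout (k : fieldType) (P D : {poly k}) (n : nat) :
  separable_poly P -> (2%:R : k) != 0 ->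
  exists u alpha : {poly k}, D = P^`() ^+ n * u - 2%:R * alpha * P ^+ n.
Proof.
rewrite unlock => /(coprimep_expl n)/(coprimep_expr n) copP k2.
have [[w1 w2] /= Bw] := Bezout_eq1_coprimepP _ _ copP.
exists (D * w2), (- (2%:R^-1)%:P * (D * w1)).
have half : 2%:R * (2%:R^-1)%:P = 1 :> {poly k} by rewrite -polyC_natr -polyCM mulfV.
have -> : P^`() ^+ n * (D * w2) - 2%:R * (- (2%:R^-1)%:P * (D * w1)) * P ^+ n =
    D * (w1 * P ^+ n + w2 * P^`() ^+ n)
    + (2%:R * (2%:R^-1)%:P - 1) * (D * w1 * P ^+ n) by ring.
by rewrite Bw half subrr mul0r addr0 mulr1.
Qed.

Section TruncatedWitt.
Variables (k : fieldType) (p : nat) (W : comNzRingType).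
Hypothesis charp : p \in [pchar k].
Variables (pi : {rmorphism W -> k}) (sigma : {rmorphism W -> W}) (mp : k -> W).
Hypothesis pi_surj : forall c : k, exists a : W, pi a = c.
Hypothesis pi_ker : forall a : W, pi a = 0 <-> exists b : W, a = p%:R * b.
Hypothesis natr_p_expr2 : (p ^ 2)%:R = 0 :> W.
Hypothesis pi_sigma : forall a : W, pi (sigma a) = pi a ^+ p.
Hypothesis mp_pi : forall a : W, mp (pi a) = p%:R * a.

Lemma natr_p_sqr : p%:R * p%:R = 0 :> {poly W}.
Proof. by rewrite -natrM mulnn -polyC_natr natr_p_expr2. Qed.

Lemma map_poly_pi_natr : map_poly pi p%:R = 0.
Proof. by rewrite rmorph_nat -polyC_natr (pcharf0 charp). Qed.

Lemma map_poly_pi_surj (u : {poly k}) : exists U, map_poly pi U = u.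
Proof.
have lift c : exists a, pi a == c by have [a <-] := pi_surj c; exists a.
exists (\poly_(i < size u) xchoose (lift u`_i)).
apply/polyP => i; rewrite coef_map coef_poly; case: ltnP => [ltiu|leui].
  exact/eqP/(xchooseP (lift u`_i)).
by rewrite nth_default //; exact: rmorph0.
Qed.

Lemma map_poly_mp_pi (U : {poly W}) : map_poly mp (map_poly pi U) = p%:R * U.
Proof.
have mp0 : mp 0 = 0 by rewrite -(rmorph0 pi) mp_pi mulr0.
by apply/polyP => i; rewrite -polyC_natr coefCM (coef_map_id0 _ _ mp0) coef_map mp_pi.
Qed.

Lemma map_poly_pi_eq0 (Q : {poly W}) : map_poly pi Q = 0 -> exists E, Q = p%:R * E.
Proof.
move=> piQ0.
have divp i : exists b, Q`_i == p%:R * b.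
  have [b ->] : exists b, Q`_i = p%:R * b by apply/pi_ker; rewrite -coef_map piQ0 coef0.
  by exists b.
exists (\poly_(i < size Q) xchoose (divp i)).
apply/polyP => i; rewrite -polyC_natr coefCM coef_poly; case: ltnP => [ltiQ|leQi].
  exact/eqP/(xchooseP (divp i)).
by rewrite mulr0 nth_default.
Qed.

Lemma mulp_map_poly_pi (Q R : {poly W}) :
  map_poly pi Q = map_poly pi R -> p%:R * Q = p%:R * R.
Proof.
move=> eqQR; apply/eqP; rewrite -subr_eq0 -mulrBr.
have [E ->] : exists E, Q - R = p%:R * E.
  by apply: map_poly_pi_eq0; rewrite rmorphB /= eqQR subrr.
by rewrite mulrA natr_p_sqr mul0r.
Qed.

Lemma map_poly_pi_sigma_comp (q r : {poly W}) :
  map_poly pi r = 'X^p -> map_poly pi (map_poly sigma q \Po r) = map_poly pi q ^+ p.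
Proof.
move=> pir; rewrite map_comp_poly pir [RHS](expr_pchar_poly charp); congr (_ \Po _).
by apply/polyP => i; rewrite !coef_map /= pi_sigma.
Qed.

Lemma sigma_comp_lift (P2 U Al : {poly W}) :
    P2 ^+ p - (map_poly sigma P2 \Po 'X^p) =
    p%:R * (P2^`() ^+ p * U - 2%:R * Al * P2 ^+ p) ->
  map_poly sigma P2 \Po ('X^p + p%:R * U) = P2 ^+ p * (1 + p%:R * Al) ^+ 2.
Proof.
move=> defect.
have derivE : p%:R * (map_poly sigma P2^`() \Po 'X^p) = p%:R * P2^`() ^+ p.
  by apply: mulp_map_poly_pi; rewrite rmorphXn map_poly_pi_sigma_comp // map_polyXn.
rewrite comp_poly_taylor1; last by rewrite mulrACA natr_p_sqr mul0r.
have -> : map_poly sigma P2 \Po 'X^p =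
    P2 ^+ p - p%:R * (P2^`() ^+ p * U - 2%:R * Al * P2 ^+ p).
  by rewrite -defect opprB addrC subrK.
rewrite deriv_map mulrCA mulrA derivE.
have -> : P2 ^+ p * (1 + p%:R * Al) ^+ 2 =
  P2 ^+ p - p%:R * (P2^`() ^+ p * U - 2%:R * Al * P2 ^+ p) + p%:R * P2^`() ^+ p * U
  + (p%:R * p%:R) * (Al ^+ 2 * P2 ^+ p) by ring.
by rewrite natr_p_sqr mul0r addr0.
Qed.

Lemma frobenius_defect_decomposition (P2 : {poly W}) :
    separable_poly (map_poly pi P2) -> (2%:R : k) != 0 ->
  exists u alpha : {poly k},
    P2 ^+ p - (map_poly sigma P2 \Po 'X^p) =
    map_poly mp ((map_poly pi P2)^`() ^+ p * u - 2%:R * alpha * map_poly pi P2 ^+ p).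
Proof.
move=> sepP k2.
have [E defE] : exists E, P2 ^+ p - (map_poly sigma P2 \Po 'X^p) = p%:R * E.
  apply: map_poly_pi_eq0.
  by rewrite rmorphB rmorphXn /= map_poly_pi_sigma_comp ?map_polyXn ?subrr.
have [u [alpha defD]] := separable_expr_Bezout (map_poly pi E) p sepP k2.
by exists u, alpha; rewrite -defD map_poly_mp_pi.
Qed.

Lemma frobenius_lift_of_defect (P2 : {poly W}) (u alpha : {poly k}) :
    P2 ^+ p - (map_poly sigma P2 \Po 'X^p) =
    map_poly mp ((map_poly pi P2)^`() ^+ p * u - 2%:R * alpha * map_poly pi P2 ^+ p) ->
  exists F : hyp_ring P2 -> hyp_ring P2,
    [/\ frobenius_lift (map_poly pi P2) p sigma pi F,
        F (hyp_x P2) = hyp_x P2 ^+ p + hyp_polx P2 (map_poly mp u),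
        F (hyp_y P2) = hyp_y P2 ^+ p + hyp_y P2 ^+ p * hyp_polx P2 (map_poly mp alpha) &
        forall G : hyp_ring P2 -> hyp_ring P2,
          semilinear_ring_endo sigma G ->
          G (hyp_x P2) = F (hyp_x P2) -> G (hyp_y P2) = F (hyp_y P2) ->
          forall a, G a = F a].
Proof.
have [U <-] := map_poly_pi_surj u; have [Al <-] := map_poly_pi_surj alpha.
rewrite !map_poly_mp_pi => defect.
have defectW : P2 ^+ p - (map_poly sigma P2 \Po 'X^p) =
    p%:R * (P2^`() ^+ p * U - 2%:R * Al * P2 ^+ p).
  by rewrite defect -map_poly_mp_pi rmorphB !rmorphM !rmorphXn rmorph_nat deriv_map.
set X' := 'X^p + p%:R * U.
set z := hyp_y P2 ^+ p + hyp_y P2 ^+ p * hyp_polx P2 (p%:R * Al).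
have z_sqr : z ^+ 2 = hyp_polx P2 (map_poly sigma P2 \Po X').
  rewrite (sigma_comp_lift defectW) /z -[X in X + _]mulr1 -mulrDr.
  rewrite -(rmorph1 (hyp_polx P2)) -rmorphD exprMn -exprM mulnC exprM hyp_y_sqr.
  by rewrite !rmorphM !rmorphXn.
have piX' : map_poly pi X' = 'X^p.
  by rewrite rmorphD rmorphM /= map_poly_pi_natr mul0r addr0 map_polyXn.
exists (hyp_endo sigma X' z); split.
- split; first exact: hyp_endo_semilinear.
  apply: hyp_map_endo charp _ _ => [q|]; first exact: map_poly_pi_sigma_comp.
  rewrite /z !rmorphD !rmorphM !rmorphXn /= (hyp_map_y pi) !(hyp_map_polx pi).
  by rewrite map_poly_pi_natr rmorph0 mul0r mulr0 addr0.
- by rewrite hyp_endo_x rmorphD rmorphXn.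
- exact: hyp_endo_y.
- move=> G semG Gx Gy; apply: hyp_endo_unique => //.
    by rewrite Gx hyp_endo_x.
  by rewrite Gy hyp_endo_y.
Qed.

End TruncatedWitt.

Theorem proposition5p2p3
  (k : finFieldType) (p : nat) (Hp : prime p) (Hchar : p \in [pchar k])
  (Hp2 : p != 2%N)
  (* W : a model of W_2(k): a ring with p^2 = 0, a surjective reduction
     pi : W -> k whose kernel is pW, and with Ann_W(p) = pW *)
  (W : comNzRingType) (pi : {rmorphism W -> k})
  (Hpi_surj : forall c : k, exists a : W, pi a = c)
  (Hpi_ker : forall a : W, pi a = 0 <-> exists b : W, a = p%:R * b)
  (Hp2W : (p ^ 2)%:R = 0 :> W)
  (Hflat : forall a : W, p%:R * a = 0 -> pi a = 0)
  (sigma : {rmorphism W -> W})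
  (Hsigma : forall a : W, pi (sigma a) = pi a ^+ p)
  (mp : k -> W) (Hmp : forall a : W, mp (pi a) = p%:R * a)
  (* the polynomial P_2 = P mod p^2, monic of odd degree 2g+1 with separable
     reduction Pbar *)
  (g : nat) (P2 : {poly W}) (HP2monic : P2 \is monic)
  (HP2deg : size P2 = (2 * g + 2)%N)
  (Hsep : separable_poly (map_poly pi P2)) :
  let Pbar := map_poly pi P2 in
  let eqn (u alpha : {poly k}) :=
    P2 ^+ p - ((map_poly sigma P2) \Po 'X^p)
    = map_poly mp (Pbar^`() ^+ p * u - 2%:R * alpha * Pbar ^+ p) in
  (exists u alpha : {poly k}, eqn u alpha) /\
  (forall u alpha : {poly k}, eqn u alpha ->
     exists F : hyp_ring P2 -> hyp_ring P2,
       [/\ frobenius_lift Pbar p sigma pi F,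
           F (hyp_x P2) = hyp_x P2 ^+ p + hyp_polx P2 (map_poly mp u),
           F (hyp_y P2) = hyp_y P2 ^+ p + hyp_y P2 ^+ p * hyp_polx P2 (map_poly mp alpha) &
           forall G : hyp_ring P2 -> hyp_ring P2,
             semilinear_ring_endo sigma G ->
             G (hyp_x P2) = F (hyp_x P2) -> G (hyp_y P2) = F (hyp_y P2) ->
             forall a, G a = F a]).
Proof.
move=> Pbar eqn.
have two_neq0 : (2%:R : k) != 0 by rewrite -(dvdn_pcharf Hchar) dvdn_prime2.
split.
  exact: (frobenius_defect_decomposition Hchar Hpi_ker Hsigma Hmp Hsep two_neq0).
move=> u alpha; exact: (frobenius_lift_of_defect Hchar Hpi_surj Hpi_ker Hp2W Hsigma Hmp).
Qed.
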